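(* Let $\boldsymbol{\rho}=(\rho_{ij})_{i,j\in[d]}$ be a $d\times d$ correlation matrix, $d\ge 2$. Define a relation on $[d]$ by $$i \sim j \iff \max_{l\in[d],\, l\neq i,j} |\rho_{il}-\rho_{jl}| = 0 .$$ Then $\sim$ is an equivalence relation, and the partition $G^{\star}$ of $[d]$ into its equivalence classes is the unique coarsest partition $G$ of $[d]$ for which there exist a membership matrix $\mathbf{Z}$ associated with $G$, a $K\times K$ matrix $\boldsymbol{\Pi}$ ($K$ = number of blocks of $G$) and a $d\times d$ diagonal matrix $\boldsymbol{\Gamma}$ with $$\boldsymbol{\rho}=\mathbf{Z}\boldsymbol{\Pi}\mathbf{Z}^{\top}+\boldsymbol{\Gamma}.$$ That is, $G^{\star}$ itself admits such a decomposition, and every partition $G$ admitting such a decomposition is a refinement of $G^{\star}$.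
   Context: $[d]=\{1,\dots,d\}$. For a partition $G=\{G_1,\dots,G_K\}$ of $[d]$ with membership map $z:[d]\to[K]$ ($z(i)=k$ iff $i\in G_k$), the associated membership matrix is the $d\times K$ matrix $\mathbf{Z}=(\mathbf{1}_{\{z(i)=k\}})_{(i,k)\in[d]\times[K]}$. A partition $G$ is finer than (a refinement of) $G'$ if every block of $G$ is contained in a block of $G'$; ''coarsest'' refers to this partial order. *)

From HB Require Import structures.
From mathcomp Require Import all_boot all_order all_algebra.
Set Implicit Arguments. Unset Strict Implicit. Unset Printing Implicit Defensive.
Import Order.TTheory GRing.Theory Num.Theory.
Local Open Scope ring_scope.

Definition correlation_matrix (R : realFieldType) (d : nat) (rho : 'M[R]_d) : Prop :=
  [/\ rho^T = rho,
      (forall i, rho i i = 1) &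
      (forall v : 'cV[R]_d, 0 <= (v^T *m rho *m v) 0 0)].

Definition simb (R : realFieldType) (d : nat) (rho : 'M[R]_d) : rel 'I_d :=
  fun i j => \big[Num.max/0]_(l < d | (l != i) && (l != j)) `|rho i l - rho j l| == 0.

Definition memb_mx (R : realFieldType) (d K : nat) (z : 'I_d -> 'I_K) : 'M[R]_(d, K) :=
  \matrix_(i < d, k < K) (z i == k)%:R.

Definition blocks_of (d K : nat) (z : 'I_d -> 'I_K) : {set {set 'I_d}} :=
  [set [set i | z i == k] | k : 'I_K].

(* Since a
   partition has no empty block, blocks_of z = G forces z to be onto [K]. *)
Definition admits_decomp (R : realFieldType) (d : nat) (rho : 'M[R]_d)
    (G : {set {set 'I_d}}) : Prop :=
  exists K (z : 'I_d -> 'I_K) (Pi : 'M[R]_K) (Gamma : 'M[R]_d),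
    [/\ blocks_of z = G, is_diag_mx Gamma &
        rho = memb_mx R z *m Pi *m (memb_mx R z)^T + Gamma].

Definition finer (d : nat) (G G' : {set {set 'I_d}}) : Prop :=
  forall B, B \in G -> exists2 C, C \in G' & B \subset C.

From HB Require Import structures.
From mathcomp Require Import all_boot all_order all_algebra.
Import Order.TTheory GRing.Theory Num.Theory.
Local Open Scope ring_scope.

(* Unfolding the maximum, i ~ j says exactly that rows i and j
   of rho agree off the columns i and j.  This relation is always reflexive
   and symmetric; for a symmetric rho it is also transitive, and moreover
   the off-diagonal entry rho i j only depends on the ~-classes of i and j
   (simb_offdiag).  On the other hand, since Gamma is diagonal and
   (Z Pi Z^T) a b = Pi (z a) (z b), a decomposition rho = Z Pi Z^T + Gamma
   with membership map z exists iff the off-diagonal entries of rho only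
   depend on the z-blocks of their indices (decompE, decomp_of_blockwise).
   Hence:
   - G* admits a decomposition: take z the index of the ~-class, which makes
     off-diagonal entries blockwise constant by simb_offdiag;
   - any admissible G is finer than G*: if z a = z b then, for l <> a, b,
     rho a l = Pi (z a) (z l) = rho b l, i.e. a ~ b. *)

Section Similarity.
Context {R : realFieldType} {d : nat} {rho : 'M[R]_d}.

Lemma simbP i j :
  reflect (forall l, l != i -> l != j -> rho i l = rho j l) (simb rho i j).
Proof.
apply: (iffP eqP) => [maxE l li lj | rowsE].
- have : `|rho i l - rho j l| <= 0.
    by rewrite -maxE; apply: le_bigmax_cond; rewrite li lj.
  by rewrite normr_le0 subr_eq0 => /eqP.
- apply: (big_ind (fun x => x = 0)) => [||l /andP[li lj]].
  + by [].
  + by move=> x y -> ->; rewrite maxxx.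
  + by rewrite rowsE // subrr normr0.
Qed.

Lemma simb_refl i : simb rho i i.
Proof. exact/simbP. Qed.

Lemma simb_sym {i j} : simb rho i j -> simb rho j i.
Proof. by move/simbP=> rowsE; apply/simbP=> l lj li; rewrite rowsE. Qed.

Hypothesis rho_sym : rho^T = rho.

Lemma rhoC i j : rho i j = rho j i.
Proof. by rewrite -[in LHS]rho_sym mxE. Qed.

(* Transitivity needs symmetry for the column l = y, which x ~ y does not see. *)
Lemma simb_trans {x y z} : simb rho x y -> simb rho y z -> simb rho x z.
Proof.
move=> /simbP row_xy /simbP row_yz; apply/simbP => l lx lz.
have [lyE|ly] := eqVneq l y; last by rewrite row_xy // row_yz.
subst l; have [->//|xz] := eqVneq x z.
have [xy zy zx] : [/\ x != y, z != y & z != x] by split; rewrite eq_sym.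
by rewrite (rhoC x y) (row_yz x) // (rhoC z x) (row_xy z) // rhoC.
Qed.

Lemma simb_equiv : equivalence_rel (simb rho).
Proof.
move=> x y z; split=> [|xy]; first exact: simb_refl.
apply/idP/idP => [xz | yz]; first exact: simb_trans (simb_sym xy) xz.
exact: simb_trans xy yz.
Qed.

Lemma simb_offdiag i j i' j' : simb rho i i' -> simb rho j j' ->
  i != j -> i' != j' -> rho i j = rho i' j'.
Proof.
move=> /simbP row_ii' /simbP row_jj' ij i'j'.
have [ii'E|ii'] := eqVneq i i'.
  subst i'; by rewrite (rhoC i j) (row_jj' i) // rhoC.
have i'i : i' != i by rewrite eq_sym.
have [ji'E|ji'] := eqVneq j i'.
  subst j; have [j'iE|j'i] := eqVneq j' i; first by rewrite j'iE rhoC.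
  have ij' : i != j' by rewrite eq_sym.
  have j'i' : j' != i' by rewrite eq_sym.
  by rewrite (rhoC i i') (row_jj' i) // rhoC (row_ii' j').
have [ji i'j] : j != i /\ i' != j by split; rewrite eq_sym.
by rewrite (row_ii' j) // (rhoC i' j) (row_jj' i') // rhoC.
Qed.

End Similarity.

Section Decomposition.
Context {R : realFieldType} {d K : nat} {z : 'I_d -> 'I_K}.
Local Notation Z := (memb_mx R z).

Lemma memb_mx_conjE (A : 'M[R]_K) i j : (Z *m A *m Z^T) i j = A (z i) (z j).
Proof.
rewrite mxE (bigD1 (z j)) //= big1 => [|k kj]; last first.
  by rewrite !mxE eq_sym (negbTE kj) mulr0.
rewrite addr0 !mxE eqxx mulr1 (bigD1 (z i)) //= big1 => [|k ki]; last first.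
  by rewrite !mxE eq_sym (negbTE ki) mul0r.
by rewrite addr0 !mxE eqxx mul1r.
Qed.

Lemma decompE {rho : 'M[R]_d} {Pi : 'M[R]_K} {Gamma : 'M[R]_d} {a b} :
  is_diag_mx Gamma -> rho = Z *m Pi *m Z^T + Gamma ->
  a != b -> rho a b = Pi (z a) (z b).
Proof.
move=> /is_diag_mxP Gamma_diag -> ab.
by rewrite mxE memb_mx_conjE Gamma_diag ?addr0.
Qed.

(* Conversely, blockwise constant off-diagonal entries give a decomposition:
   Pi picks any off-diagonal representative of a pair of blocks and Gamma
   corrects the diagonal. *)
Lemma decomp_of_blockwise (rho : 'M[R]_d) :
  (forall a b a' b', z a = z a' -> z b = z b' -> a != b -> a' != b' ->
     rho a b = rho a' b') ->
  exists Pi Gamma, is_diag_mx Gamma /\ rho = Z *m Pi *m Z^T + Gamma.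
Proof.
move=> blockwise.
pose Pi := \matrix_(k, k') if [pick p : 'I_d * 'I_d |
  [&& z p.1 == k, z p.2 == k' & p.1 != p.2]] is Some p then rho p.1 p.2 else 0.
pose Gamma := diag_mx (\row_i (rho i i - Pi (z i) (z i))).
exists Pi, Gamma; split; first exact: diag_mx_is_diag.
apply/matrixP => i j; rewrite mxE memb_mx_conjE [Gamma i j]mxE.
have [<-|ij] := eqVneq i j; first by rewrite mulr1n !mxE subrKC.
rewrite mulr0n addr0 mxE.
case: pickP => [[a b] /and3P[/eqP za /eqP zb ab]|]; first exact: blockwise.
by move/(_ (i, j)); rewrite /= !eqxx ij.
Qed.

End Decomposition.

Lemma partition_membership {d} {P : {set {set 'I_d}}} (i0 : 'I_d) :
  partition P [set: 'I_d] ->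
  exists K (z : 'I_d -> 'I_K),
    blocks_of z = P /\ forall x y, (z x == z y) = (y \in pblock P x).
Proof.
case/and3P=> /eqP coverP trivP set0P.
have inP x : x \in cover P by rewrite coverP inE.
have P0 : pblock P i0 \in P by rewrite pblock_mem.
pose z i := enum_rank_in P0 (pblock P i).
have zE x y : (z x == z y) = (y \in pblock P x).
  rewrite -eq_pblock //; apply/eqP/eqP => [|xyE]; last by rewrite /z xyE.
  by move/enum_rank_in_inj; apply; rewrite pblock_mem.
have blockE x : [set i | z i == z x] = pblock P x.
  by apply/setP => y; rewrite inE eq_sym zE.
have memP B : B \in P -> exists2 x, x \in B & pblock P x = B.
  move=> BP; have /set0Pn[x xB] : B != set0 by apply: contraNneq set0P => <-.
  by exists x; rewrite // (def_pblock trivP BP xB).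
exists #|P|, z; split=> //; apply/setP => B; apply/imsetP/idP => [[k _ ->]|BP].
  have [x _ xE] := memP _ (enum_valP k).
  suff <- : z x = k by rewrite blockE pblock_mem.
  by rewrite /z xE enum_valK_in.
by have [x _ <-] := memP _ BP; exists (z x); rewrite ?blockE.
Qed.

Lemma blocks_finer (R : realFieldType) d (rho : 'M[R]_d) K (z : 'I_d -> 'I_K) :
  equivalence_rel (simb rho) -> set0 \notin blocks_of z ->
  (forall x y, z x = z y -> simb rho x y) ->
  finer (blocks_of z) (equivalence_partition (simb rho) [set: 'I_d]).
Proof.
move=> simb_eq set0G z_simb _ /imsetP[k _ ->].
have /set0Pn[x] : [set i | z i == k] != set0.
  by apply: contraNneq set0G => <-; apply: imset_f.
rewrite inE => /eqP zx.
exists (pblock (equivalence_partition (simb rho) [set: 'I_d]) x).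
  by rewrite pblock_mem // (cover_partition (equivalence_partitionP _)) ?inE.
apply/subsetP => y; rewrite inE => /eqP zy.
by rewrite pblock_equivalence_partition ?inE // z_simb // zx zy.
Qed.

Theorem theorem1 (R : realFieldType) (d : nat) (rho : 'M[R]_d) :
  (2 <= d)%N -> correlation_matrix rho ->
  equivalence_rel (simb rho) /\
  (let Gstar := equivalence_partition (simb rho) [set: 'I_d] in
   partition Gstar [set: 'I_d] /\
   admits_decomp rho Gstar /\
   (forall G : {set {set 'I_d}}, partition G [set: 'I_d] ->
      admits_decomp rho G -> finer G Gstar)).
Proof.
move=> d_ge2 [rho_sym _ _].
have simb_eq := simb_equiv rho_sym.
have simb_eqD : {in [set: 'I_d] & &, equivalence_rel (simb rho)}.
  by move=> x y z _ _ _; apply: simb_eq.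
split=> //=; split; first exact: equivalence_partitionP.
split.
- have i0 : 'I_d := Ordinal (leq_trans (isT : 0 < 2)%N d_ge2).
  have [K [z [blocksE zE]]] :=
    partition_membership i0 (equivalence_partitionP simb_eqD).
  have [Pi [Gamma [Gamma_diag rhoE]]] : exists Pi Gamma, is_diag_mx Gamma /\
      rho = memb_mx R z *m Pi *m (memb_mx R z)^T + Gamma.
    apply: decomp_of_blockwise => a b a' b' /eqP za /eqP zb.
    rewrite !zE !pblock_equivalence_partition ?inE // in za zb.
    exact: simb_offdiag.
  by exists K, z, Pi, Gamma.
- move=> G /and3P[_ _ set0G] [K [z [Pi [Gamma [GE Gamma_diag rhoE]]]]]; subst G.
  apply: blocks_finer => // x y zxy; apply/simbP => l lx ly.
  have [xl yl] : x != l /\ y != l by rewrite !(eq_sym _ l).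
  by rewrite !(decompE Gamma_diag rhoE) // zxy.
Qed.
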